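(* Let $\alpha$ be an ordinal such that $(T_\alpha,P_\alpha)$ is consistent. Then for every $\mathcal L$-sentence $\varphi$ with $\#\varphi\in P_1^+$, we have $(\mathbb N,T_\alpha,P_\alpha)\not\models_{SK}\varphi\vee\neg\varphi$.
   Context: Language. Let $\mathcal L_{\mathbb N}$ be the language of first-order Peano arithmetic and $\mathcal L=\mathcal L_{\mathbb N}\cup\{\mathrm T,\mathrm P\}$ with unary predicates $\mathrm T,\mathrm P$. $\mathcal L$-formulas are in Tait style: literals are $s=t$, $s\neq t$, $\mathrm Tt$, $\neg\mathrm Tt$, $\mathrm Pt$, $\neg\mathrm Pt$; formulas are built from literals by $\wedge,\vee,\forall,\exists$; negation of an arbitrary formula is defined by De Morgan dualities with $\neg\neg\varphi:=\varphi$. A standard Gödel numbering is fixed; $\#e$ is the code of $e$, $\ulcorner e\urcorner$ the numeral of $\#e$, $\mathrm{val}(t)$ the value of a closed term $t$, $\dot\neg$ the primitive recursive function with $\dot\neg(\#\varphi)=\#\neg\varphi$; $\mathrm T\varphi,\mathrm P\varphi$ abbreviate $\mathrm T\ulcorner\varphi\urcorner,\mathrm P\ulcorner\varphi\urcorner$. Semantics. A partial model is $(\mathbb N,T,P)$ with $\mathbb N$ the standard model and $T=(T^+,T^-)$, $P=(P^+,P^-)$ pairs of subsets of $\omega$. Strong Kleene satisfaction $\models_{SK}$: arithmetic literals evaluated in $\mathbb N$; $\mathrm Tt$ satisfied iff $\mathrm{val}(t)\in T^+$, $\neg\mathrm Tt$ iff $\mathrm{val}(t)\in T^-$, likewise for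 $\mathrm P$ with $P^\pm$; conjunction iff both, disjunction iff at least one, $\forall x\varphi(x)$ iff all numeral instances, $\exists x\varphi(x)$ iff some numeral instance. $(T,P)$ is consistent iff $T^+\cap T^-=\emptyset$ and $P^+\cap P^-=\emptyset$. Base paradoxicality. $\mathrm{PA}[\mathrm{SK}]$ is the two-sided sequent calculus for Strong Kleene logic with identity in $\mathcal L$ (initial sequents $\varphi\Rightarrow\varphi$, cut, weakening, the rule from $\Gamma\Rightarrow\Delta,\varphi$ infer $\neg\varphi,\Gamma\Rightarrow\Delta$, usual rules for $\wedge,\vee,\forall,\exists$, reflexivity $\Rightarrow t=t$, replacement from $\Gamma\Rightarrow\Delta,\varphi(t)$ infer $\Gamma\Rightarrow\Delta,s\neq t,\varphi(s)$) plus the initial sequents of Peano arithmetic and the induction rule for all $\mathcal L$-formulas. A sentence $\varphi$ is base paradoxical iff $\mathrm{PA}[\mathrm{SK}]$ derives $\varphi\Leftrightarrow\neg\mathrm T\varphi$ and $\neg\varphi\Leftrightarrow\mathrm T\varphi$ ($\Leftrightarrow$ meaning both sequents). $B(x)$ is an $\mathcal L_{\mathbb N}$-formula defining in $\mathbb N$ the set of codes of base paradoxical sentences, and $\Pi(x):=B(x)\vee B(\dot\neg x)$. Jump and sequence. Let $\mathscr P(x)$ be the $\mathcal L$-formula which is the disjunction of: (1) $x$ codes a sentence and $\Pi(x)$; (2) $x$ codes a sentence $\mathrm Tt$ ($t$ a closed term) and $\mathrm P(\mathrm{val}(t))$; (3) $x$ codes a sentence $\neg\mathrm Tt$ and $\mathrm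 P(\mathrm{val}(t))$; (4) $x$ codes a sentence $\psi\wedge\theta$ and $(\mathrm P\psi\wedge\mathrm P\theta)\vee(\mathrm T\psi\wedge\mathrm P\theta)\vee(\mathrm T\theta\wedge\mathrm P\psi)$; (5) $x$ codes a sentence $\psi\vee\theta$ and $(\mathrm P\psi\wedge\mathrm P\theta)\vee(\neg\mathrm T\psi\wedge\mathrm P\theta)\vee(\neg\mathrm T\theta\wedge\mathrm P\psi)$; (6) $x$ codes a sentence $\forall v\psi$ and $\exists y\,\mathrm P\psi(\dot y)\wedge\forall y(\mathrm P\psi(\dot y)\vee\mathrm T\psi(\dot y))$; (7) $x$ codes a sentence $\exists v\psi$ and $\exists y\,\mathrm P\psi(\dot y)\wedge\forall y(\mathrm P\psi(\dot y)\vee\neg\mathrm T\psi(\dot y))$; here $\psi(\dot y)$ is the code of the result of substituting the numeral of $y$ for $v$. Write $\mathscr P(\varphi)$ for $\mathscr P(\ulcorner\varphi\urcorner)$. Define $\Gamma_{\mathscr{TP}}(T,P)=\big((\{\#\varphi:(\mathbb N,T,P)\models_{SK}\varphi\},\{\#\varphi:(\mathbb N,T,P)\models_{SK}\neg\varphi\}),(\{\#\varphi:(\mathbb N,T,P)\models_{SK}\mathscr P(\varphi)\},\{\#\varphi:(\mathbb N,T,P)\models_{SK}\varphi\vee\neg\varphi\})\big)$, $\varphi$ ranging over $\mathcal L$-sentences. Define $(T_0,P_0)=((\emptyset,\emptyset),(\emptyset,\emptyset))$, $(T_{\beta+1},P_{\beta+1})=\Gamma_{\mathscr{TP}}(T_\beta,P_\beta)$,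 $(T_\lambda,P_\lambda)=\bigcup_{\beta<\lambda}(T_\beta,P_\beta)$ (componentwise union) for limit $\lambda$; $P_\alpha=(P_\alpha^+,P_\alpha^-)$. *)

From Stdlib Require Import List Arith.
Import ListNotations.

Inductive term : Type :=
| tvar  : nat -> term
| tzero : term
| tsucc : term -> term
| tplus : term -> term -> term
| tmult : term -> term -> term.

(* Tait-style formulas: literals, /\, \/, forall, exists *)
Inductive formula : Type :=
| feq  : term -> term -> formula
| fneq : term -> term -> formula
| fT   : term -> formula
| fnT  : term -> formula
| fP   : term -> formula
| fnP  : term -> formula
| fand : formula -> formula -> formula
| for_ : formula -> formula -> formula
| fall : formula -> formula          (* binds de Bruijn index 0 *)
| fex  : formula -> formula.

Fixpoint neg (phi : formula) : formula :=
  match phi with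
  | feq s t => fneq s t
  | fneq s t => feq s t
  | fT t => fnT t
  | fnT t => fT t
  | fP t => fnP t
  | fnP t => fP t
  | fand a b => for_ (neg a) (neg b)
  | for_ a b => fand (neg a) (neg b)
  | fall a => fex (neg a)
  | fex a => fall (neg a)
  end.

Fixpoint tsubst (sg : nat -> term) (t : term) : term :=
  match t with
  | tvar n => sg n
  | tzero => tzero
  | tsucc u => tsucc (tsubst sg u)
  | tplus u v => tplus (tsubst sg u) (tsubst sg v)
  | tmult u v => tmult (tsubst sg u) (tsubst sg v)
  end.

Definition tshift (t : term) : term := tsubst (fun k => tvar (S k)) t.

Definition up (sg : nat -> term) : nat -> term :=
  fun n => match n with 0 => tvar 0 | S m => tshift (sg m) end.

Fixpoint fsubst (sg : nat -> term) (phi : formula) : formula :=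
  match phi with
  | feq s t => feq (tsubst sg s) (tsubst sg t)
  | fneq s t => fneq (tsubst sg s) (tsubst sg t)
  | fT t => fT (tsubst sg t)
  | fnT t => fnT (tsubst sg t)
  | fP t => fP (tsubst sg t)
  | fnP t => fnP (tsubst sg t)
  | fand a b => fand (fsubst sg a) (fsubst sg b)
  | for_ a b => for_ (fsubst sg a) (fsubst sg b)
  | fall a => fall (fsubst (up sg) a)
  | fex a => fex (fsubst (up sg) a)
  end.

Definition shift (phi : formula) : formula := fsubst (fun k => tvar (S k)) phi.

Definition scons {X : Type} (x : X) (f : nat -> X) : nat -> X :=
  fun n => match n with 0 => x | S m => f m end.

(* phi(t): substitute t for the variable with index 0 (others shifted down) *)
Definition inst (phi : formula) (t : term) : formula := fsubst (scons t tvar) phi.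

Definition num (n : nat) : term := Nat.iter n tsucc tzero.

Fixpoint tbound (k : nat) (t : term) : Prop :=
  match t with
  | tvar n => n < k
  | tzero => True
  | tsucc u => tbound k u
  | tplus u v => tbound k u /\ tbound k v
  | tmult u v => tbound k u /\ tbound k v
  end.

Fixpoint fbound (k : nat) (phi : formula) : Prop :=
  match phi with
  | feq s t | fneq s t => tbound k s /\ tbound k t
  | fT t | fnT t | fP t | fnP t => tbound k t
  | fand a b | for_ a b => fbound k a /\ fbound k b
  | fall a | fex a => fbound (S k) a
  end.

Definition closed_term (t : term) : Prop := tbound 0 t.
Definition sentence (phi : formula) : Prop := fbound 0 phi.

Fixpoint arithmetical (phi : formula) : Prop :=
  match phi with
  | feq _ _ | fneq _ _ => True
  | fT _ | fnT _ | fP _ | fnP _ => False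
  | fand a b | for_ a b => arithmetical a /\ arithmetical b
  | fall a | fex a => arithmetical a
  end.

Definition cpair (a b : nat) : nat := (a + b) * (a + b + 1) / 2 + b.

Fixpoint code_term (t : term) : nat :=
  match t with
  | tvar n => cpair 0 n
  | tzero => cpair 1 0
  | tsucc u => cpair 2 (code_term u)
  | tplus u v => cpair 3 (cpair (code_term u) (code_term v))
  | tmult u v => cpair 4 (cpair (code_term u) (code_term v))
  end.

Fixpoint code (phi : formula) : nat :=
  match phi with
  | feq s t => cpair 0 (cpair (code_term s) (code_term t))
  | fneq s t => cpair 1 (cpair (code_term s) (code_term t))
  | fT t => cpair 2 (code_term t)
  | fnT t => cpair 3 (code_term t)
  | fP t => cpair 4 (code_term t)
  | fnP t => cpair 5 (code_term t)
  | fand a b => cpair 6 (cpair (code a) (code b))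
  | for_ a b => cpair 7 (cpair (code a) (code b))
  | fall a => cpair 8 (code a)
  | fex a => cpair 9 (code a)
  end.

Definition quote (phi : formula) : term := num (code phi).

(* (N, T, P) with T = (Tpos, Tneg), P = (Ppos, Pneg) *)
Record model : Type := mkModel {
  Tpos : nat -> Prop; Tneg : nat -> Prop;
  Ppos : nat -> Prop; Pneg : nat -> Prop }.

Definition empty_model : model :=
  mkModel (fun _ => False) (fun _ => False) (fun _ => False) (fun _ => False).

Fixpoint tval (rho : nat -> nat) (t : term) : nat :=
  match t with
  | tvar n => rho n
  | tzero => 0
  | tsucc u => S (tval rho u)
  | tplus u v => tval rho u + tval rho v
  | tmult u v => tval rho u * tval rho v
  end.

Fixpoint sat (M : model) (rho : nat -> nat) (phi : formula) : Prop :=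
  match phi with
  | feq s t => tval rho s = tval rho t
  | fneq s t => tval rho s <> tval rho t
  | fT t => Tpos M (tval rho t)
  | fnT t => Tneg M (tval rho t)
  | fP t => Ppos M (tval rho t)
  | fnP t => Pneg M (tval rho t)
  | fand a b => sat M rho a /\ sat M rho b
  | for_ a b => sat M rho a \/ sat M rho b
  | fall a => forall n, sat M (scons n rho) a
  | fex a => exists n, sat M (scons n rho) a
  end.

(* satisfaction of sentences (the environment is irrelevant for them) *)
Definition rho0 : nat -> nat := fun _ => 0.
Definition satS (M : model) (phi : formula) : Prop := sat M rho0 phi.

Definition consistent (M : model) : Prop :=
  (forall n, ~ (Tpos M n /\ Tneg M n)) /\ (forall n, ~ (Ppos M n /\ Pneg M n)).

(* ---------- The calculus PA[SK] (sequents as finite sets = lists) ---------- *)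

(* phi(Sx) for phi(x) with x the variable of index 0 *)
Definition succ_sub : nat -> term :=
  fun n => match n with 0 => tsucc (tvar 0) | S m => tvar (S m) end.

Inductive Der : list formula -> list formula -> Prop :=
| D_ax : forall phi, Der [phi] [phi]
| D_weak : forall G D G' D', Der G D -> incl G G' -> incl D D' -> Der G' D'
| D_cut : forall G D phi, Der G (phi :: D) -> Der (phi :: G) D -> Der G D
| D_neg : forall G D phi, Der G (phi :: D) -> Der (neg phi :: G) D
| D_andL : forall G D a b, Der (a :: b :: G) D -> Der (fand a b :: G) D
| D_andR : forall G D a b, Der G (a :: D) -> Der G (b :: D) -> Der G (fand a b :: D)
| D_orL : forall G D a b, Der (a :: G) D -> Der (b :: G) D -> Der (for_ a b :: G) D
| D_orR : forall G D a b, Der G (a :: b :: D) -> Der G (for_ a b :: D)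
| D_allL : forall G D a t, Der (inst a t :: G) D -> Der (fall a :: G) D
| D_allR : forall G D a,
    Der (map shift G) (a :: map shift D) -> Der G (fall a :: D)
| D_exL : forall G D a,
    Der (a :: map shift G) (map shift D) -> Der (fex a :: G) D
| D_exR : forall G D a t, Der G (inst a t :: D) -> Der G (fex a :: D)
| D_refl : forall t, Der [] [feq t t]
| D_repl : forall G D a s t,
    Der G (inst a t :: D) -> Der G (fneq s t :: inst a s :: D)
| D_PA1 : forall s, Der [] [fneq (tsucc s) tzero]
| D_PA2 : forall s t, Der [] [fneq (tsucc s) (tsucc t); feq s t]
| D_PA3 : forall s, Der [] [feq (tplus s tzero) s]
| D_PA4 : forall s t, Der [] [feq (tplus s (tsucc t)) (tsucc (tplus s t))]
| D_PA5 : forall s, Der [] [feq (tmult s tzero) tzero]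
| D_PA6 : forall s t, Der [] [feq (tmult s (tsucc t)) (tplus (tmult s t) s)]
(* induction rule, for all L-formulas a(x) (x = index 0, fresh for G, D) *)
| D_ind : forall G D a t,
    Der (a :: map shift G) (fsubst succ_sub a :: map shift D) ->
    Der (inst a tzero :: G) (inst a t :: D).

Definition DerIff (phi psi : formula) : Prop := Der [phi] [psi] /\ Der [psi] [phi].

Definition base_paradoxical (phi : formula) : Prop :=
  sentence phi /\
  DerIff phi (neg (fT (quote phi))) /\
  DerIff (neg phi) (fT (quote phi)).

Definition defines_bp (B : formula) : Prop :=
  arithmetical B /\ fbound 1 B /\
  forall n rho, sat empty_model rho (inst B (num n)) <->
                exists phi, code phi = n /\ base_paradoxical phi.

(* ---------- The formula script-P, given by its SK satisfaction clauses ---------- *)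

Definition scrP_sat (B : formula) (M : model) (phi : formula) : Prop :=
  (sentence phi /\
     (satS M (inst B (quote phi)) \/ satS M (inst B (quote (neg phi)))))
  \/ (exists t, phi = fT t /\ sentence phi /\ Ppos M (tval rho0 t))
  \/ (exists t, phi = fnT t /\ sentence phi /\ Ppos M (tval rho0 t))
  \/ (exists psi th, phi = fand psi th /\ sentence phi /\
        ((Ppos M (code psi) /\ Ppos M (code th)) \/
         (Tpos M (code psi) /\ Ppos M (code th)) \/
         (Tpos M (code th) /\ Ppos M (code psi))))
  \/ (exists psi th, phi = for_ psi th /\ sentence phi /\
        ((Ppos M (code psi) /\ Ppos M (code th)) \/
         (Tneg M (code psi) /\ Ppos M (code th)) \/
         (Tneg M (code th) /\ Ppos M (code psi))))
  \/ (exists psi, phi = fall psi /\ sentence phi /\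
        (exists y, Ppos M (code (inst psi (num y)))) /\
        (forall y, Ppos M (code (inst psi (num y))) \/
                   Tpos M (code (inst psi (num y)))))
  \/ (exists psi, phi = fex psi /\ sentence phi /\
        (exists y, Ppos M (code (inst psi (num y)))) /\
        (forall y, Ppos M (code (inst psi (num y))) \/
                   Tneg M (code (inst psi (num y))))).

Definition Gamma (B : formula) (M : model) : model :=
  mkModel
    (fun n => exists phi, sentence phi /\ code phi = n /\ satS M phi)
    (fun n => exists phi, sentence phi /\ code phi = n /\ satS M (neg phi))
    (fun n => exists phi, sentence phi /\ code phi = n /\ scrP_sat B M phi)
    (fun n => exists phi, sentence phi /\ code phi = n /\ satS M (for_ phi (neg phi))).

(* An ordinal alpha is represented as an element a of a well-ordered type
   (A, R); alpha is the order type of the R-predecessors of a. *)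
Definition well_order {A : Type} (R : A -> A -> Prop) : Prop :=
  well_founded R /\
  (forall x y z, R x y -> R y z -> R x z) /\
  (forall x y, R x y \/ x = y \/ R y x).

Definition imm_pred {A : Type} (R : A -> A -> Prop) (b a : A) : Prop :=
  R b a /\ ~ (exists c, R b c /\ R c a).

(* successor stage: Gamma of the stage of the immediate predecessor;
   otherwise (0 or limit): union of the earlier stages *)
Definition stage_step (B : formula) {A : Type} (R : A -> A -> Prop) (a : A)
    (rec : forall b, R b a -> model) : model :=
  let st (f : model -> nat -> Prop) (n : nat) : Prop :=
      (exists b (h : R b a), imm_pred R b a /\ f (Gamma B (rec b h)) n) \/
      ((~ exists b, imm_pred R b a) /\ exists b (h : R b a), f (rec b h) n) in
  mkModel (st Tpos) (st Tneg) (st Ppos) (st Pneg).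

Definition stage (B : formula) {A : Type} (R : A -> A -> Prop)
    (wf : well_founded R) : A -> model :=
  Fix wf (fun _ => model) (stage_step B R).

Definition stage0 : model := empty_model.
Definition stage1 (B : formula) : model := Gamma B stage0.

(** The sentences in [P_1^+] are exactly those [phi] such that [phi] or [neg phi]
    is base paradoxical, since in the empty model only clause (1) of the
    definition of [scrP] can hold.  Every stage satisfies
    [(T_a, P_a) <= Gamma (T_a, P_a)], so a code in [T_a^+] (resp. [T_a^-]) is the
    code of a sentence true (resp. false) in [(N, T_a, P_a)].  If the stage is
    consistent, Strong Kleene logic is sound for it, so a true base paradoxical
    [chi] would make [~ T chi] true, hence [chi] false as well; symmetrically for
    a false [chi]. *)
From Stdlib Require Import List Arith Lia Classical FunctionalExtensionality.
Import ListNotations.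

Lemma half_triangle_succ s : S s * (S s + 1) / 2 = s * (s + 1) / 2 + S s.
Proof.
  replace (S s * (S s + 1)) with (s * (s + 1) + S s * 2) by ring.
  now rewrite Nat.div_add.
Qed.

Lemma half_triangle_lt s s' : s < s' -> s * (s + 1) / 2 + s < s' * (s' + 1) / 2.
Proof. induction 1; rewrite half_triangle_succ; lia. Qed.

Lemma cpair_inj a b c d : cpair a b = cpair c d -> a = c /\ b = d.
Proof.
  unfold cpair; intro H.
  destruct (lt_eq_lt_dec (a + b) (c + d)) as [[lt | eq] | lt].
  - pose proof (half_triangle_lt _ _ lt); lia.
  - rewrite eq in H; lia.
  - pose proof (half_triangle_lt _ _ lt); lia.
Qed.

Ltac cpair_inv :=
  repeat match goal with
  | H : cpair _ _ = cpair _ _ |- _ => apply cpair_inj in H; destruct H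
  end.

Lemma code_term_inj t t' : code_term t = code_term t' -> t = t'.
Proof.
  revert t'; induction t; destruct t'; simpl; intro H; cpair_inv;
    try discriminate; f_equal; auto.
Qed.

Lemma code_inj phi psi : code phi = code psi -> phi = psi.
Proof.
  revert psi; induction phi; destruct psi; simpl; intro H; cpair_inv;
    try discriminate; f_equal; auto using code_term_inj.
Qed.

Lemma neg_involutive phi : neg (neg phi) = phi.
Proof. induction phi; simpl; congruence. Qed.

Lemma tval_ext rho rho' t : (forall k, rho k = rho' k) -> tval rho t = tval rho' t.
Proof. intro E; induction t; simpl; auto. Qed.

Lemma tval_subst rho sg t : tval rho (tsubst sg t) = tval (fun k => tval rho (sg k)) t.
Proof. induction t; simpl; auto. Qed.

Lemma tval_num rho n : tval rho (num n) = n.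
Proof. induction n; simpl; auto. Qed.

Lemma sat_ext M phi rho rho' :
  (forall k, rho k = rho' k) -> sat M rho phi -> sat M rho' phi.
Proof.
  revert rho rho'; induction phi; simpl; intros rho rho' E;
    try (rewrite !(tval_ext rho rho') by exact E; tauto).
  - intros [h1 h2]; split; eauto.
  - intros [h | h]; [left | right]; eauto.
  - intros h n; apply (IHphi (scons n rho)); auto; intros [|k]; simpl; auto.
  - intros [n h]; exists n; apply (IHphi (scons n rho)); auto; intros [|k]; simpl; auto.
Qed.

Lemma tval_up rho sg n k :
  tval (scons n rho) (up sg k) = scons n (fun k => tval rho (sg k)) k.
Proof. destruct k; simpl; [reflexivity|]; unfold tshift; now rewrite tval_subst. Qed.

Lemma sat_subst M phi rho sg :
  sat M rho (fsubst sg phi) <-> sat M (fun k => tval rho (sg k)) phi.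
Proof.
  revert rho sg; induction phi; simpl; intros rho sg; rewrite ?tval_subst; try tauto.
  - rewrite IHphi1, IHphi2; tauto.
  - rewrite IHphi1, IHphi2; tauto.
  - split; intros H n; specialize (H n); rewrite IHphi in *;
      refine (sat_ext _ _ _ _ _ H); intro k; now rewrite tval_up.
  - split; intros [n H]; exists n; rewrite IHphi in *;
      refine (sat_ext _ _ _ _ _ H); intro k; now rewrite tval_up.
Qed.

Lemma sat_inst M rho phi t : sat M rho (inst phi t) <-> sat M (scons (tval rho t) rho) phi.
Proof. unfold inst; rewrite sat_subst; split; apply sat_ext; intros [|k]; reflexivity. Qed.

Lemma sat_shift M rho phi : sat M rho (shift phi) <-> sat M (fun k => rho (S k)) phi.
Proof. unfold shift; rewrite sat_subst; reflexivity. Qed.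

Lemma Forall_sat_shift M rho n G :
  Forall (sat M (scons n rho)) (map shift G) <-> Forall (sat M rho) G.
Proof.
  rewrite Forall_map; split; apply Forall_impl; intro g; apply (sat_shift M (scons n rho) g).
Qed.

Lemma Exists_sat_shift M rho n D :
  Exists (sat M (scons n rho)) (map shift D) <-> Exists (sat M rho) D.
Proof.
  rewrite Exists_map; split; apply Exists_impl; intro d; apply (sat_shift M (scons n rho) d).
Qed.

(** * Soundness of PA[SK] in consistent models *)

Definition sequent_valid (M : model) (G D : list formula) : Prop :=
  forall rho, Forall (sat M rho) G -> Exists (sat M rho) D.

Section Soundness.

Variable M : model.

Lemma valid_cut G D phi :
  sequent_valid M G (phi :: D) -> sequent_valid M (phi :: G) D -> sequent_valid M G D.
Proof.
  intros H1 H2 rho HG; specialize (H1 rho HG); apply Exists_cons in H1 as [Hphi | HD];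
    [apply H2, Forall_cons |]; assumption.
Qed.

Lemma valid_allR G D a :
  sequent_valid M (map shift G) (a :: map shift D) -> sequent_valid M G (fall a :: D).
Proof.
  intros H rho HG; destruct (classic (Exists (sat M rho) D)) as [HD | HD]; [now right|].
  left; intro n.
  specialize (H (scons n rho) (proj2 (Forall_sat_shift _ _ _ _) HG)).
  apply Exists_cons in H as [Ha | HD']; [exact Ha|].
  contradiction (HD (proj1 (Exists_sat_shift _ _ _ _) HD')).
Qed.

Lemma valid_exL G D a :
  sequent_valid M (a :: map shift G) (map shift D) -> sequent_valid M (fex a :: G) D.
Proof.
  intros H rho HG; apply Forall_cons_iff in HG as [[n Ha] HG].
  apply (Exists_sat_shift _ _ n), H, Forall_cons; [exact Ha|].
  now apply Forall_sat_shift.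
Qed.

Lemma valid_repl G D a s t :
  sequent_valid M G (inst a t :: D) -> sequent_valid M G (fneq s t :: inst a s :: D).
Proof.
  intros H rho HG; destruct (Nat.eq_dec (tval rho s) (tval rho t)) as [E | NE]; [|now left].
  right; specialize (H rho HG); apply Exists_cons in H as [Ha | HD]; [|now right].
  left; apply sat_inst; rewrite E; now apply sat_inst.
Qed.

Lemma valid_ind G D a t :
  sequent_valid M (a :: map shift G) (fsubst succ_sub a :: map shift D) ->
  sequent_valid M (inst a tzero :: G) (inst a t :: D).
Proof.
  intros H rho HG; apply Forall_cons_iff in HG as [H0 HG].
  destruct (classic (Exists (sat M rho) D)) as [HD | HD]; [now right|].
  left; apply sat_inst.
  assert (Hall : forall n, sat M (scons n rho) a).
  { induction n as [|n IH]; [exact (proj1 (sat_inst _ _ _ _) H0)|].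
    specialize (H (scons n rho) (Forall_cons _ IH (proj2 (Forall_sat_shift _ _ _ _) HG))).
    apply Exists_cons in H as [Hsucc | HD'].
    - apply sat_subst in Hsucc; eapply sat_ext; [|exact Hsucc]; intros [|k]; reflexivity.
    - contradiction (HD (proj1 (Exists_sat_shift _ _ _ _) HD')). }
  apply Hall.
Qed.

Hypothesis HM : consistent M.

Lemma sat_not_both phi rho : ~ (sat M rho phi /\ sat M rho (neg phi)).
Proof.
  destruct HM as [HT HP]; revert rho.
  induction phi; simpl; intros rho [h1 h2];
  repeat match goal with
         | H : _ /\ _ |- _ => destruct H
         | H : _ \/ _ |- _ => destruct H
         | H : exists _, _ |- _ => destruct H
         end;
  solve [eauto | firstorder].
Qed.

Lemma valid_neg G D phi :
  sequent_valid M G (phi :: D) -> sequent_valid M (neg phi :: G) D.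
Proof.
  intros H rho HG; apply Forall_cons_iff in HG as [Hneg HG].
  specialize (H rho HG); apply Exists_cons in H as [Hphi | HD]; [|exact HD].
  contradiction (sat_not_both phi rho (conj Hphi Hneg)).
Qed.

Lemma Der_sound G D : Der G D -> sequent_valid M G D.
Proof.
  induction 1;
    try solve [eauto using valid_cut, valid_neg, valid_allR, valid_exL, valid_repl, valid_ind];
    intros rho HG; try (apply Forall_cons_iff in HG as [Hhd HG]; simpl in Hhd);
    try solve [left; simpl; lia].
  - now left.
  - exact (incl_Exists H1 (IHDer rho (incl_Forall H0 HG))).
  - destruct Hhd; auto using Forall_cons.
  - specialize (IHDer1 rho HG); apply Exists_cons in IHDer1 as [Ha | HD]; [|now right].
    specialize (IHDer2 rho HG); apply Exists_cons in IHDer2 as [Hb | HD]; [|now right].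
    now left.
  - destruct Hhd; auto using Forall_cons.
  - specialize (IHDer rho HG); apply Exists_cons in IHDer as [Ha | Hb]; [now left; left|].
    apply Exists_cons in Hb as [Hb | HD]; [now left; right | now right].
  - apply IHDer, Forall_cons; [apply sat_inst, Hhd | exact HG].
  - specialize (IHDer rho HG); apply Exists_cons in IHDer as [Ha | HD]; [|now right].
    left; apply sat_inst in Ha; eexists; exact Ha.
  - destruct (Nat.eq_dec (tval rho s) (tval rho t)); [right; left | left]; simpl; lia.
Qed.

Corollary Der_single_sound phi psi : Der [phi] [psi] -> satS M phi -> satS M psi.
Proof.
  intros H Hphi; specialize (Der_sound _ _ H rho0 (Forall_cons _ Hphi (Forall_nil _))).
  intro Hpsi; apply Exists_cons in Hpsi as [Hpsi | Hnil]; [exact Hpsi | inversion Hnil].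
Qed.

End Soundness.

(** * Monotonicity of the stages *)

Definition component (f : model -> nat -> Prop) : Prop :=
  f = Tpos \/ f = Tneg \/ f = Ppos \/ f = Pneg.

Definition le_model (M N : model) : Prop :=
  forall f, component f -> forall n, f M n -> f N n.

Section Monotonicity.

Variables (M N : model).
Hypothesis HMN : le_model M N.

Let le_Tpos n : Tpos M n -> Tpos N n := HMN Tpos (or_introl eq_refl) n.
Let le_Tneg n : Tneg M n -> Tneg N n := HMN Tneg (or_intror (or_introl eq_refl)) n.
Let le_Ppos n : Ppos M n -> Ppos N n := HMN Ppos (or_intror (or_intror (or_introl eq_refl))) n.
Let le_Pneg n : Pneg M n -> Pneg N n := HMN Pneg (or_intror (or_intror (or_intror eq_refl))) n.

Lemma sat_mono rho phi : sat M rho phi -> sat N rho phi.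
Proof.
  revert rho; induction phi; simpl; intros rho; auto.
  - intros [h1 h2]; auto.
  - intros [h | h]; auto.
  - intros [n h]; eauto.
Qed.

Lemma scrP_sat_mono B phi : scrP_sat B M phi -> scrP_sat B N phi.
Proof.
  unfold scrP_sat, satS.
  intros [H | [H | [H | [H | [H | [H | H]]]]]].
  - left; destruct H as [Hs [Hb | Hb]]; split; auto using sat_mono.
  - right; left; destruct H as [t [E [Hs Hp]]]; eauto.
  - do 2 right; left; destruct H as [t [E [Hs Hp]]]; eauto.
  - do 3 right; left; destruct H as [psi [th [E [Hs Hc]]]].
    exists psi, th; intuition auto.
  - do 4 right; left; destruct H as [psi [th [E [Hs Hc]]]].
    exists psi, th; intuition auto.
  - do 5 right; left; destruct H as [psi [E [Hs [[y Hy] Hall]]]].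
    exists psi; repeat split; eauto; intro z; destruct (Hall z); auto.
  - do 6 right; destruct H as [psi [E [Hs [[y Hy] Hall]]]].
    exists psi; repeat split; eauto; intro z; destruct (Hall z); auto.
Qed.

Lemma Gamma_mono B : le_model (Gamma B M) (Gamma B N).
Proof.
  intros f [-> | [-> | [-> | ->]]] n; simpl; intros [phi [Hs [Hc Hphi]]];
    exists phi; unfold satS in *; auto using sat_mono, scrP_sat_mono.
Qed.

End Monotonicity.

Section Stages.

Variables (B : formula) (A : Type) (R : A -> A -> Prop) (wf : well_founded R).
Hypothesis HR : well_order R.

Lemma stage_unfold a : stage B R wf a = stage_step B R a (fun b _ => stage B R wf b).
Proof.
  apply (Fix_eq wf (fun _ => model) (stage_step B R)); intros x f g E.
  replace g with f; [reflexivity|].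
  apply functional_extensionality_dep; intro y.
  apply functional_extensionality_dep; intro p.
  apply E.
Qed.

Lemma stage_component a f (Hf : component f) n :
  f (stage B R wf a) n <->
  (exists b (h : R b a), imm_pred R b a /\ f (Gamma B (stage B R wf b)) n) \/
  ((~ exists b, imm_pred R b a) /\ exists b (h : R b a), f (stage B R wf b) n).
Proof. rewrite stage_unfold; destruct Hf as [-> | [-> | [-> | ->]]]; reflexivity. Qed.

(* Both halves are proved together by well-founded induction: at a successor
   [a] the second half for the immediate predecessor is needed for the first. *)
Lemma stage_increasing a :
  (forall b, R b a -> le_model (stage B R wf b) (stage B R wf a)) /\
  le_model (stage B R wf a) (Gamma B (stage B R wf a)).
Proof.
  induction a as [a IH] using (well_founded_ind wf).
  assert (Hinc : forall b, R b a -> le_model (stage B R wf b) (stage B R wf a)).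
  { intros b Hb f Hf n Hn; apply (stage_component a f Hf).
    destruct (classic (exists p, imm_pred R p a)) as [[p Hp] | Hlim].
    - left; exists p, (proj1 Hp); split; [exact Hp|].
      apply (proj2 (IH p (proj1 Hp))); [exact Hf|].
      destruct HR as [_ [_ Htot]]; destruct (Htot b p) as [Hbp | [<- | Hpb]].
      + exact (proj1 (IH p (proj1 Hp)) b Hbp f Hf n Hn).
      + exact Hn.
      + contradiction (proj2 Hp); eauto.
    - right; split; [exact Hlim|]; eauto. }
  split; [exact Hinc|].
  intros f Hf n Hn; apply (stage_component a f Hf) in Hn.
  destruct Hn as [[p [Hp [_ Hn]]] | [_ [b [Hb Hn]]]].
  - exact (Gamma_mono _ _ (Hinc p Hp) B f Hf n Hn).
  - apply (Gamma_mono _ _ (Hinc b Hb) B f Hf n), (proj2 (IH b Hb) f Hf n Hn).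
Qed.

Lemma stage_Tpos_sat a psi : Tpos (stage B R wf a) (code psi) -> satS (stage B R wf a) psi.
Proof.
  intro H; destruct (proj2 (stage_increasing a) Tpos (or_introl eq_refl) _ H)
    as [phi [_ [E Hphi]]].
  now apply code_inj in E as ->.
Qed.

Lemma stage_Tneg_sat a psi :
  Tneg (stage B R wf a) (code psi) -> satS (stage B R wf a) (neg psi).
Proof.
  intro H; destruct (proj2 (stage_increasing a) Tneg (or_intror (or_introl eq_refl)) _ H)
    as [phi [_ [E Hphi]]].
  now apply code_inj in E as ->.
Qed.

End Stages.

Lemma satS_neg_T_quote M psi : satS M (neg (fT (quote psi))) = Tneg M (code psi).
Proof. unfold satS, quote; cbn [neg sat]; now rewrite tval_num. Qed.

Lemma satS_T_quote M psi : satS M (fT (quote psi)) = Tpos M (code psi).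
Proof. unfold satS, quote; cbn [neg sat]; now rewrite tval_num. Qed.

Lemma base_paradoxical_unsettled M (HM : consistent M)
  (HTpos : forall psi, Tpos M (code psi) -> satS M psi)
  (HTneg : forall psi, Tneg M (code psi) -> satS M (neg psi))
  chi : base_paradoxical chi -> ~ satS M (for_ chi (neg chi)).
Proof.
  intros [_ [[Hfalse _] [Htrue _]]] H.
  apply (sat_not_both M HM chi rho0); destruct H as [H | H]; split; try exact H.
  - apply HTneg; rewrite <- satS_neg_T_quote; exact (Der_single_sound M HM _ _ Hfalse H).
  - apply HTpos; rewrite <- satS_T_quote; exact (Der_single_sound M HM _ _ Htrue H).
Qed.

Lemma scrP_sat_empty_model B phi :
  scrP_sat B empty_model phi ->
  satS empty_model (inst B (quote phi)) \/ satS empty_model (inst B (quote (neg phi))).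
Proof.
  intros [[_ H] | H]; [exact H | exfalso].
  repeat match goal with
         | H : _ \/ _ |- _ => destruct H
         | H : _ /\ _ |- _ => destruct H
         | H : exists _, _ |- _ => destruct H
         end; simpl in *; assumption.
Qed.

Lemma stage1_Ppos_base_paradoxical B (HB : defines_bp B) phi :
  Ppos (stage1 B) (code phi) -> base_paradoxical phi \/ base_paradoxical (neg phi).
Proof.
  intros [psi [_ [E HP]]]; apply code_inj in E as ->.
  destruct HB as [_ [_ HBdef]].
  destruct (scrP_sat_empty_model B phi HP) as [H | H]; [left | right];
    apply HBdef in H as [chi [E Hchi]]; now apply code_inj in E as <-.
Qed.

Theorem mainTheorem6 (B : formula) (HB : defines_bp B)
  (A : Type) (R : A -> A -> Prop) (wf : well_founded R) (HR : well_order R)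
  (a : A) :
  consistent (stage B R wf a) ->
  forall phi : formula, sentence phi ->
    Ppos (stage1 B) (code phi) ->
    ~ satS (stage B R wf a) (for_ phi (neg phi)).
Proof.
  intros Hc phi _ HP.
  pose proof (base_paradoxical_unsettled _ Hc
                (stage_Tpos_sat B A R wf HR a) (stage_Tneg_sat B A R wf HR a))
    as Hunsettled.
  destruct (stage1_Ppos_base_paradoxical B HB phi HP) as [Hbp | Hbp].
  - exact (Hunsettled phi Hbp).
  - intro H; apply (Hunsettled _ Hbp); rewrite neg_involutive.
    destruct H as [H | H]; [right | left]; exact H.
Qed.
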